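(* Let $S$ be a nonempty set and $G$ a group of permutations of $S$, and suppose that $G$ and $SV_G$ are both finitely generated, equipped with word metrics from finite generating sets. Then there exists a coarse Lipschitz map $\rho\colon SV_G\to G$ such that $\rho\circ\iota_\varnothing$ is the identity of $G$. In particular, $G$ is a quasi-retract of $SV_G$, and $\iota_\varnothing$ is a quasi-isometric embedding of $G$ into $SV_G$.
   Context: Let $\mathfrak C=\{0,1\}^{\omega}$ be the Cantor set, $S$ a nonempty set, and $G$ a subgroup of the symmetric group of $S$. Let $\mathfrak C^S$ be the space of all functions $S\to\mathfrak C$ with the product topology. For a function $\psi\colon S\to\{0,1\}^*$ with $\psi(s)=\varnothing$ for all but finitely many $s$, the dyadic brick $B(\psi)$ is the set of $\kappa\in\mathfrak C^S$ such that $\psi(s)$ is a prefix of $\kappa(s)$ for all $s\in S$; the canonical homeomorphism $\Phi_\psi\colon\mathfrak C^S\to B(\psi)$ is $\Phi_\psi(\kappa)(s)=\psi(s)\cdot\kappa(s)$. For $\gamma\in G$ let $\tau_\gamma\colon\mathfrak C^S\to\mathfrak C^S$ be $\tau_\gamma(\kappa)(s)=\kappa(\gamma^{-1}s)$. The twist homeomorphism $B(\varphi)\to B(\psi)$ associated to $\gamma$ is $\Phi_\psi\circ\tau_\gamma\circ\Phi_\varphi^{-1}$. The twisted Brin–Thompson group $SV_G$ is the group of all homeomorphisms $h$ of $\mathfrak C^S$ for which there exist two partitions $B(\varphi_1),\dots,B(\varphi_n)$ and $B(\psi_1),\dots,B(\psi_n)$ of $\mathfrak C^S$ into dyadic bricks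 and $\gamma_1,\dots,\gamma_n\in G$ such that $h|_{B(\varphi_i)}$ is the twist homeomorphism $B(\varphi_i)\to B(\psi_i)$ associated to $\gamma_i$. The embedding $\iota_\varnothing\colon G\to SV_G$ is $\iota_\varnothing(\gamma)=\tau_\gamma$. A map $f\colon X\to Y$ of metric spaces is coarse Lipschitz if $d(f(x),f(x'))\le C\,d(x,x')+D$ for some constants $C,D>0$ and all $x,x'$. It is a quasi-isometric embedding if moreover $d(f(x),f(x'))\ge \frac1C d(x,x')-D$. $Y$ is a quasi-retract of $X$ if there exist coarse Lipschitz maps $\rho\colon X\to Y$ and $\iota\colon Y\to X$ and $E>0$ with $d(\rho(\iota(y)),y)\le E$ for all $y\in Y$. *)

From Stdlib Require Import Reals Lra Lia List Arith ClassicalEpsilon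
  FunctionalExtensionality ProofIrrelevance.
Import ListNotations.
Set Implicit Arguments.

Record Perm (T : Type) := mkPerm {
  pf : T -> T;
  pinv : T -> T;
  pK : forall x, pinv (pf x) = x;
  pKV : forall x, pf (pinv x) = x }.

Definition pid (T : Type) : Perm T :=
  @mkPerm T (fun x => x) (fun x => x) (fun _ => eq_refl) (fun _ => eq_refl).

Lemma pcomp_K T (a b : Perm T) x : pinv b (pinv a (pf a (pf b x))) = x.
Proof. now rewrite !pK. Qed.
Lemma pcomp_KV T (a b : Perm T) x : pf a (pf b (pinv b (pinv a x))) = x.
Proof. now rewrite !pKV. Qed.

Definition pcomp T (a b : Perm T) : Perm T :=
  @mkPerm T (fun x => pf a (pf b x)) (fun x => pinv b (pinv a x))
    (pcomp_K a b) (pcomp_KV a b).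

Definition pinvp T (a : Perm T) : Perm T :=
  @mkPerm T (pinv a) (pf a) (pKV a) (pK a).

Definition is_subgroup T (G : Perm T -> Prop) : Prop :=
  G (pid T) /\ (forall a b, G a -> G b -> G (pcomp a b)) /\
  (forall a, G a -> G (pinvp a)).

Definition letter T (l : bool * Perm T) : Perm T :=
  if fst l then pinvp (snd l) else snd l.

Definition eval_word T (w : list (bool * Perm T)) : Perm T :=
  fold_right (fun l acc => pcomp (letter l) acc) (pid T) w.

Definition word_in T (X : list (Perm T)) (w : list (bool * Perm T)) : Prop :=
  Forall (fun l => In (snd l) X) w.

Definition generates T (G : Perm T -> Prop) (X : list (Perm T)) : Prop :=
  (forall x, In x X -> G x) /\
  (forall g, G g -> exists w, word_in X w /\ eval_word w = g).

Definition wlen_le T (X : list (Perm T)) (g : Perm T) (n : nat) : Prop :=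
  exists w, word_in X w /\ length w <= n /\ eval_word w = g.

Definition word_length T (X : list (Perm T)) (g : Perm T) : nat :=
  epsilon (inhabits 0%nat)
    (fun n => wlen_le X g n /\ forall m, wlen_le X g m -> n <= m).

Definition word_dist T (X : list (Perm T)) (x y : Perm T) : R :=
  INR (word_length X (pcomp (pinvp x) y)).

Local Open Scope R_scope.
Definition coarse_lipschitz (A B : Type) (dA : A -> A -> R) (dB : B -> B -> R)
  (f : A -> B) : Prop :=
  exists C D : R, 0 < C /\ 0 < D /\
    forall x x', dB (f x) (f x') <= C * dA x x' + D.

Definition qi_embedding (A B : Type) (dA : A -> A -> R) (dB : B -> B -> R)
  (f : A -> B) : Prop :=
  exists C D : R, 0 < C /\ 0 < D /\
    forall x x', dB (f x) (f x') <= C * dA x x' + D /\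
                 dB (f x) (f x') >= / C * dA x x' - D.

Definition quasi_retract (A B : Type) (dA : A -> A -> R) (dB : B -> B -> R) : Prop :=
  exists (rho : A -> B) (iota : B -> A) (E : R),
    coarse_lipschitz dA dB rho /\ coarse_lipschitz dB dA iota /\ 0 < E /\
    forall y, dB (rho (iota y)) y <= E.

Local Close Scope R_scope.
Definition Cantor := nat -> bool.
Definition Conf (S : Type) := S -> Cantor.

Definition is_prefix (w : list bool) (c : Cantor) : Prop :=
  forall i, i < length w -> c i = nth i w false.

Definition fin_supp S (psi : S -> list bool) : Prop :=
  exists L : list S, forall s, psi s <> [] -> In s L.

Definition in_brick S (psi : S -> list bool) (k : Conf S) : Prop :=
  forall s, is_prefix (psi s) (k s).

Definition app_word (w : list bool) (c : Cantor) : Cantor :=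
  fun n => if n <? length w then nth n w false else c (n - length w).

Definition Phi S (psi : S -> list bool) (k : Conf S) : Conf S :=
  fun s => app_word (psi s) (k s).
Definition Phi_inv S (phi : S -> list bool) (k : Conf S) : Conf S :=
  fun s n => k s (n + length (phi s)).

Definition tau S (g : Perm S) (k : Conf S) : Conf S := fun s => k (pinv g s).

Definition twist S (phi psi : S -> list bool) (g : Perm S) (k : Conf S) : Conf S :=
  Phi psi (tau g (Phi_inv phi k)).

Definition brick_partition S (n : nat) (phi : nat -> S -> list bool) : Prop :=
  (forall i, i < n -> fin_supp (phi i)) /\
  (forall k : Conf S, exists i, i < n /\ in_brick (phi i) k) /\
  (forall i j (k : Conf S), i < n -> j < n ->
      in_brick (phi i) k -> in_brick (phi j) k -> i = j).

(* continuity for the product topology on C^S; the dyadic bricks form a basis *)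
Definition continuous S (f : Conf S -> Conf S) : Prop :=
  forall psi k, fin_supp psi -> in_brick psi (f k) ->
    exists phi, fin_supp phi /\ in_brick phi k /\
      forall k', in_brick phi k' -> in_brick psi (f k').

Definition homeomorphism S (h : Perm (Conf S)) : Prop :=
  continuous (pf h) /\ continuous (pinv h).

Definition SV S (G : Perm S -> Prop) (h : Perm (Conf S)) : Prop :=
  homeomorphism h /\
  exists (n : nat) (phi psi : nat -> S -> list bool) (g : nat -> Perm S),
    brick_partition n phi /\ brick_partition n psi /\
    forall i, i < n -> G (g i) /\
      forall k, in_brick (phi i) k -> pf h k = twist (phi i) (psi i) (g i) k.

Definition GType S (G : Perm S -> Prop) := { g : Perm S | G g }.
Definition SVType S (G : Perm S -> Prop) := { h : Perm (Conf S) | SV G h }.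

Definition dG S (G : Perm S -> Prop) (X : list (Perm S)) (x y : GType G) : R :=
  word_dist X (proj1_sig x) (proj1_sig y).
Definition dSV S (G : Perm S -> Prop) (X : list (Perm (Conf S))) (x y : SVType G) : R :=
  word_dist X (proj1_sig x) (proj1_sig y).

Definition tauPerm S (g : Perm S) : Perm (Conf S).
Proof.
  refine (@mkPerm (Conf S) (tau g) (fun k s => k (pf g s)) _ _);
  intro k; apply functional_extensionality; intro s; unfold tau;
  [now rewrite pK | now rewrite pKV].
Defined.

Lemma cont_reindex S (f g : S -> S) :
  (forall s, f (g s) = s) -> (forall s, g (f s) = s) ->
  continuous (fun (k : Conf S) s => k (f s)).
Proof.
  intros H1 H2 psi k [L HL] Hk.
  exists (fun s => psi (g s)); repeat split.
  - exists (map f L); intros s Hs. apply HL in Hs.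
    rewrite <- (H1 s). now apply in_map.
  - intros s. specialize (Hk (g s)). simpl in Hk. now rewrite H1 in Hk.
  - intros k' Hk' s. specialize (Hk' (f s)). simpl in Hk'. now rewrite H2 in Hk'.
Qed.

Lemma nil_brick_partition S : brick_partition 1 (fun _ (_ : S) => @nil bool).
Proof.
  repeat split.
  - intros i _. exists []. intros s H. now elim H.
  - intros k. exists 0. split; [lia|]. intros s i Hi. simpl in Hi. lia.
  - intros i j k Hi Hj _ _. lia.
Qed.

Lemma tau_SV S (G : Perm S -> Prop) (g : Perm S) : G g -> SV G (tauPerm g).
Proof.
  intros Hg. split.
  - split.
    + apply (@cont_reindex S (pinv g) (pf g)); intro s; [apply pK | apply pKV].
    + apply (@cont_reindex S (pf g) (pinv g)); intro s; [apply pKV | apply pK].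
  - exists 1, (fun _ _ => []), (fun _ _ => []), (fun _ => g).
    split; [apply nil_brick_partition|]. split; [apply nil_brick_partition|].
    intros i _. split; [exact Hg|]. intros k _.
    apply functional_extensionality; intro s.
    apply functional_extensionality; intro n.
    unfold twist, Phi, Phi_inv, tau, app_word; simpl.
    now rewrite Nat.sub_0_r, Nat.add_0_r.
Qed.

Definition iota0 S (G : Perm S -> Prop) (g : GType G) : SVType G :=
  exist _ (tauPerm (proj1_sig g)) (@tau_SV S G (proj1_sig g) (proj2_sig g)).

(* Near each point p, an element h of SV_G acts as a twist by some gamma in G,
   and this gamma, the germ of h at p, is unique.  Germs obey the chain rule:
   the germ of h1 h2 at p is the germ of h1 at h2 p times the germ of h2 at p.
   A generator of SV_G is made of finitely many twists, so it has finitely many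
   germs, and the germ of a word of length n at any point has G-word length at
   most M n.  Let rho(h) be the germ of h at h^-1 of a base point; by the chain
   rule rho(x)^-1 rho(y) is a germ of x^-1 y, so rho is M-Lipschitz, and
   rho(tau_gamma) = gamma.  Since iota_0 is a homomorphism it is Lipschitz too,
   and a Lipschitz map with a Lipschitz left inverse is a quasi-isometric
   embedding whose image is a quasi-retract. *)

From Stdlib Require Import Reals List Lra Lia Arith ClassicalEpsilon
  FunctionalExtensionality ProofIrrelevance Classical.
Import ListNotations.
Set Implicit Arguments.

Section Permutations.
Variable T : Type.

Lemma perm_ext (a b : Perm T) : (forall x, pf a x = pf b x) -> a = b.
Proof.
  intros H.
  assert (Hinv : forall y, pinv a y = pinv b y).
  { intros y. rewrite <- (pK b (pinv a y)), <- H, pKV. reflexivity. }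
  destruct a as [fa ia Ka KVa], b as [fb ib Kb KVb]; simpl in *.
  assert (fa = fb) by (apply functional_extensionality; exact H).
  assert (ia = ib) by (apply functional_extensionality; exact Hinv).
  subst. f_equal; apply proof_irrelevance.
Qed.

Lemma perm_ext_inv (a b : Perm T) : (forall x, pinv a x = pinv b x) -> a = b.
Proof.
  intros H. apply perm_ext. intros x.
  rewrite <- (pKV b (pf a x)), <- H, pK. reflexivity.
Qed.

Lemma pcomp_pinvp_l (a : Perm T) : pcomp (pinvp a) a = pid T.
Proof. apply perm_ext. intros x. apply pK. Qed.

End Permutations.

Section WordLength.
Variables (T : Type) (X : list (Perm T)).

Lemma eval_word_app (w1 w2 : list (bool * Perm T)) :
  eval_word (w1 ++ w2) = pcomp (eval_word w1) (eval_word w2).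
Proof.
  induction w1 as [|l w1 IH]; simpl; [|rewrite IH]; apply perm_ext; reflexivity.
Qed.

Definition word_inv (w : list (bool * Perm T)) : list (bool * Perm T) :=
  rev (map (fun l => (negb (fst l), snd l)) w).

Lemma eval_word_inv w : eval_word (word_inv w) = pinvp (eval_word w).
Proof.
  induction w as [|[b x] w IH]; unfold word_inv in *; simpl.
  - apply perm_ext; reflexivity.
  - rewrite eval_word_app, IH. apply perm_ext. intros y. destruct b; reflexivity.
Qed.

Lemma word_in_inv w : word_in X w -> word_in X (word_inv w).
Proof.
  unfold word_in, word_inv. rewrite !Forall_forall. intros H l Hl.
  apply in_rev, in_map_iff in Hl. destruct Hl as [l' [<- Hl']]. exact (H l' Hl').
Qed.

Lemma wlen_of_word w : word_in X w -> wlen_le X (eval_word w) (length w).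
Proof. intros H. exists w. auto. Qed.

Lemma wlen_le_trans (g : Perm T) m n : wlen_le X g m -> m <= n -> wlen_le X g n.
Proof. intros [w [Hw [Hlen Hg]]] Hmn. exists w. repeat split; auto; lia. Qed.

Lemma wlen_pid : wlen_le X (pid T) 0.
Proof. exists []. split; [constructor | split; [simpl; lia | reflexivity]]. Qed.

Lemma wlen_pcomp (a b : Perm T) m n :
  wlen_le X a m -> wlen_le X b n -> wlen_le X (pcomp a b) (m + n).
Proof.
  intros [w1 [A1 [B1 <-]]] [w2 [A2 [B2 <-]]]. exists (w1 ++ w2).
  repeat split; [apply Forall_app; auto | rewrite length_app; lia | apply eval_word_app].
Qed.

Lemma wlen_pinvp (a : Perm T) n : wlen_le X a n -> wlen_le X (pinvp a) n.
Proof.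
  intros [w [A [B <-]]]. exists (word_inv w). repeat split.
  - apply word_in_inv, A.
  - unfold word_inv. rewrite length_rev, length_map. exact B.
  - apply eval_word_inv.
Qed.

Lemma wlen_letter b (a : Perm T) n : wlen_le X a n -> wlen_le X (letter (b, a)) n.
Proof. destruct b; [apply wlen_pinvp | trivial]. Qed.

Lemma exists_least_nat (P : nat -> Prop) n :
  P n -> exists k, P k /\ forall m, P m -> k <= m.
Proof.
  induction n as [n IH] using (well_founded_induction lt_wf); intros Hn.
  destruct (classic (exists m, m < n /\ P m)) as [[m [Hm Pm]] | Hnone].
  - exact (IH m Hm Pm).
  - exists n. split; [exact Hn|]. intros m Pm.
    destruct (Nat.lt_ge_cases m n); [exfalso; eauto | assumption].
Qed.

Lemma word_length_spec (g : Perm T) n : wlen_le X g n ->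
  wlen_le X g (word_length X g) /\ word_length X g <= n.
Proof.
  intros H. unfold word_length.
  destruct (epsilon_spec (inhabits 0)
              (fun k => wlen_le X g k /\ forall m, wlen_le X g m -> k <= m)) as [A B].
  - exact (exists_least_nat _ _ H).
  - split; [exact A | exact (B n H)].
Qed.

Lemma word_length_le (g : Perm T) n : wlen_le X g n -> word_length X g <= n.
Proof. intros H. exact (proj2 (word_length_spec H)). Qed.

Lemma word_dist_refl (x : Perm T) : word_dist X x x = 0%R.
Proof.
  unfold word_dist. rewrite pcomp_pinvp_l.
  rewrite (proj1 (Nat.le_0_r _) (word_length_le wlen_pid)). reflexivity.
Qed.

End WordLength.

Lemma word_length_le_scaled T U (X : list (Perm T)) (Y : list (Perm U)) g g' K :
  (exists n, wlen_le X g n) ->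
  (forall w, word_in X w -> eval_word w = g -> wlen_le Y g' (K * length w)) ->
  word_length Y g' <= K * word_length X g.
Proof.
  intros [n Hn] H.
  destruct (word_length_spec Hn) as [[w [Hw [Hlen Hg]]] _].
  apply word_length_le. apply wlen_le_trans with (K * length w).
  - exact (H w Hw Hg).
  - apply Nat.mul_le_mono_l, Hlen.
Qed.

Lemma uniform_bound (A : Type) (P : A -> nat -> Prop) (L : list A) :
  (forall x m n, P x m -> m <= n -> P x n) ->
  (forall x, In x L -> exists n, P x n) -> exists N, forall x, In x L -> P x N.
Proof.
  intros Hmono. induction L as [|a L IH]; intros H.
  - exists 0. intros x [].
  - destruct IH as [N HN]; [intros x Hx; apply H; right; exact Hx|].
    destruct (H a (or_introl eq_refl)) as [n Hn].
    exists (N + n). intros x [<- | Hx]; eapply Hmono; eauto; lia.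
Qed.

Lemma generates_wlen T (G : Perm T -> Prop) X {g} :
  generates G X -> G g -> exists n, wlen_le X g n.
Proof.
  intros [_ Hgen] Hg. destruct (Hgen g Hg) as [w [Hw <-]].
  exists (length w). apply wlen_of_word, Hw.
Qed.

Lemma wlen_exists_diff T (H : Perm T -> Prop) X {x y : Perm T} :
  generates H X -> H x -> H y -> exists n, wlen_le X (pcomp (pinvp x) y) n.
Proof.
  intros HX Hx Hy.
  destruct (generates_wlen HX Hx) as [m Hm], (generates_wlen HX Hy) as [n Hn].
  exists (m + n). apply wlen_pcomp; [apply wlen_pinvp|]; assumption.
Qed.

Lemma wlen_hom_word T U (f : Perm T -> Perm U) (X : list (Perm T)) (Y : list (Perm U)) K :
  f (pid T) = pid U -> (forall a b, f (pcomp a b) = pcomp (f a) (f b)) ->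
  (forall x b, In x X -> wlen_le Y (f (letter (b, x))) K) ->
  forall w, word_in X w -> wlen_le Y (f (eval_word w)) (K * length w).
Proof.
  intros Hid Hcomp HX w Hw.
  induction Hw as [|[b x] w Hx Hw IH]; simpl.
  - rewrite Hid, Nat.mul_0_r. apply wlen_pid.
  - rewrite Hcomp. replace (K * S (length w)) with (K + K * length w) by lia.
    apply wlen_pcomp; [exact (HX x b Hx) | exact IH].
Qed.

Section Germs.
Variable S : Type.

Definition local_twist (g : Perm S) (u : S -> list bool) (m : S -> nat) (k : Conf S) :
  Conf S := fun s => app_word (u s) (fun n => k (pinv g s) (n + m s)).

Definition agree_upto (len : S -> nat) (k k' : Conf S) : Prop :=
  forall t n, n < len t -> k t n = k' t n.

Definition germ (h : Perm (Conf S)) (p : Conf S) (g : Perm S) : Prop :=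
  exists u m len, forall k, agree_upto len k p -> pf h k = local_twist g u m k.

Lemma twist_local_twist phi psi (g : Perm S) :
  twist phi psi g = local_twist g psi (fun s => length (phi (pinv g s))).
Proof. reflexivity. Qed.

Lemma local_twist_far g u m (k : Conf S) s n : length (u s) <= n ->
  local_twist g u m k s n = k (pinv g s) (n - length (u s) + m s).
Proof.
  intros H. unfold local_twist, app_word.
  destruct (Nat.ltb_spec n (length (u s))); [lia | reflexivity].
Qed.

Lemma local_twist_agree g u m (len : S -> nat) (k k' : Conf S) :
  agree_upto (fun t => len (pf g t) + m (pf g t)) k k' ->
  agree_upto len (local_twist g u m k) (local_twist g u m k').
Proof.
  intros H s n Hn. unfold local_twist, app_word.
  destruct (n <? length (u s)); [reflexivity|].
  apply H. rewrite pKV. lia.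
Qed.

Lemma local_twist_comp (g1 g2 : Perm S) u1 m1 u2 m2 : exists u m,
  forall k, local_twist g1 u1 m1 (local_twist g2 u2 m2 k) = local_twist (pcomp g1 g2) u m k.
Proof.
  set (v := fun s => u2 (pinv g1 s)).
  exists (fun s => if m1 s <=? length (v s) then u1 s ++ skipn (m1 s) (v s) else u1 s),
         (fun s => if m1 s <=? length (v s) then m2 (pinv g1 s)
                   else m2 (pinv g1 s) + (m1 s - length (v s))).
  intros k. apply functional_extensionality; intro s.
  apply functional_extensionality; intro n.
  unfold local_twist, app_word; simpl. fold (v s).
  destruct (Nat.leb_spec (m1 s) (length (v s))).
  - rewrite length_app, length_skipn.
    destruct (Nat.ltb_spec n (length (u1 s))).
    + destruct (Nat.ltb_spec n (length (u1 s) + (length (v s) - m1 s))); [|lia].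
      rewrite app_nth1; auto.
    + destruct (Nat.ltb_spec (n - length (u1 s) + m1 s) (length (v s)));
        destruct (Nat.ltb_spec n (length (u1 s) + (length (v s) - m1 s))); try lia.
      * rewrite app_nth2, nth_skipn by lia. f_equal; lia.
      * f_equal; lia.
  - destruct (Nat.ltb_spec n (length (u1 s))); [reflexivity|].
    destruct (Nat.ltb_spec (n - length (u1 s) + m1 s) (length (v s))); [lia|].
    f_equal; lia.
Qed.

(* Far out on coordinate [s], [local_twist g u m k] copies [k] on coordinate
   [g^-1 s]; flipping [p] far out on a single coordinate thus detects [g^-1 s]. *)
Lemma germ_unique h p (g1 g2 : Perm S) : germ h p g1 -> germ h p g2 -> g1 = g2.
Proof.
  intros [u1 [m1 [l1 H1]]] [u2 [m2 [l2 H2]]].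
  apply perm_ext_inv. intros s. apply NNPP. intros Hne.
  set (a := pinv g1 s). set (b := pinv g2 s).
  set (k := fun t n => if n <? l1 t + l2 t then p t n
                       else if excluded_middle_informative (t = b) then true else false).
  assert (Hfar : forall t n, l1 t + l2 t <= n ->
                 k t n = if excluded_middle_informative (t = b) then true else false).
  { intros t n Hn. unfold k. destruct (Nat.ltb_spec n (l1 t + l2 t)); [lia | reflexivity]. }
  assert (Hagree : forall len : S -> nat, (forall t, len t <= l1 t + l2 t) -> agree_upto len k p).
  { intros len Hlen t n Hn. unfold k. destruct (Nat.ltb_spec n (l1 t + l2 t)); [reflexivity|].
    specialize (Hlen t). lia. }
  assert (E : local_twist g1 u1 m1 k = local_twist g2 u2 m2 k).
  { rewrite <- H1, <- H2 by (apply Hagree; intros; lia). reflexivity. }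
  set (n := length (u1 s) + length (u2 s) + l1 a + l2 a + l1 b + l2 b).
  pose proof (f_equal (fun c => c s n) E) as En. simpl in En.
  rewrite !local_twist_far in En by (unfold n; lia).
  fold a b in En. rewrite !Hfar in En by (unfold n; lia).
  destruct (excluded_middle_informative (a = b)); [contradiction|].
  destruct (excluded_middle_informative (b = b)); [discriminate | congruence].
Qed.

Lemma germ_pcomp (h1 h2 : Perm (Conf S)) p g1 g2 :
  germ h2 p g2 -> germ h1 (pf h2 p) g1 -> germ (pcomp h1 h2) p (pcomp g1 g2).
Proof.
  intros [u2 [m2 [l2 H2]]] [u1 [m1 [l1 H1]]].
  destruct (local_twist_comp g1 g2 u1 m1 u2 m2) as [u [m Hcomp]].
  exists u, m, (fun t => l2 t + (l1 (pf g2 t) + m2 (pf g2 t))).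
  intros k Hk. simpl.
  rewrite (H2 k) by (intros t n Hn; apply Hk; lia).
  rewrite H1; [apply Hcomp|].
  rewrite (H2 p) by (intros t n Hn; reflexivity).
  apply local_twist_agree. intros t n Hn. apply Hk. lia.
Qed.

Lemma germ_tauPerm (g : Perm S) p : germ (tauPerm g) p g.
Proof.
  exists (fun _ => []), (fun _ => 0), (fun _ => 0). intros k _.
  apply functional_extensionality; intro s.
  apply functional_extensionality; intro n.
  unfold local_twist, app_word; simpl. rewrite Nat.sub_0_r, Nat.add_0_r. reflexivity.
Qed.

Lemma germ_pid p : germ (pid (Conf S)) p (pid S).
Proof. exact (germ_tauPerm (pid S) p). Qed.

Lemma in_brick_agree (phi : S -> list bool) k p :
  in_brick phi p -> agree_upto (fun t => length (phi t)) k p -> in_brick phi k.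
Proof. intros Hp Hk s i Hi. rewrite Hk by exact Hi. apply Hp, Hi. Qed.

Lemma twist_in_brick phi psi (g : Perm S) k : in_brick psi (twist phi psi g k).
Proof.
  intros s i Hi. unfold twist, Phi, app_word.
  destruct (Nat.ltb_spec i (length (psi s))); [reflexivity | lia].
Qed.

Lemma twist_pinvp phi psi (g : Perm S) k :
  in_brick phi k -> twist psi phi (pinvp g) (twist phi psi g k) = k.
Proof.
  intros Hk.
  apply functional_extensionality; intro t. apply functional_extensionality; intro n.
  unfold twist, Phi, Phi_inv, tau, app_word; simpl. rewrite pK.
  destruct (Nat.ltb_spec n (length (phi t))); [symmetry; apply Hk; assumption|].
  destruct (Nat.ltb_spec (n - length (phi t) + length (psi (pf g t))) (length (psi (pf g t))));
    [lia | f_equal; lia].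
Qed.

Lemma germ_of_twist h p phi psi (g : Perm S) :
  (forall k, agree_upto (fun t => length (phi t)) k p -> pf h k = twist phi psi g k) ->
  germ h p g.
Proof.
  intros H. exists psi, (fun s => length (phi (pinv g s))), (fun t => length (phi t)).
  intros k Hk. rewrite <- twist_local_twist. exact (H k Hk).
Qed.

End Germs.

Section TwistedGroupGerms.
Variables (S : Type) (G : Perm S -> Prop).

Lemma SV_germ_letter h : SV G h ->
  exists n (g : nat -> Perm S), (forall i, i < n -> G (g i)) /\
    forall p b, exists i, i < n /\ germ (letter (b, h)) p (letter (b, g i)).
Proof.
  intros [_ [n [phi [psi [g [[_ [Pcov Pdis]] [[_ [Qcov Qdis]] Hg]]]]]]].
  exists n, g. split; [intros i Hi; exact (proj1 (Hg i Hi))|].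
  intros p [|].
  - destruct (Qcov p) as [j [Hj Bj]]. exists j. split; [exact Hj|].
    apply germ_of_twist with (psi j) (phi j). intros k Hk. simpl.
    (* [h^-1 k] lies in a brick [phi i] with [k] in [psi i]; the [psi]-bricks
       are disjoint, so [i = j]. *)
    destruct (Pcov (pinv h k)) as [i [Hi Bi]].
    pose proof (proj2 (Hg i Hi) _ Bi) as Ei. rewrite pKV in Ei.
    assert (i = j) as ->.
    { apply Qdis with k; [exact Hi | exact Hj | rewrite Ei; apply twist_in_brick |].
      exact (in_brick_agree Bj Hk). }
    rewrite <- (twist_pinvp (psi j) (g j) Bi), <- Ei. reflexivity.
  - destruct (Pcov p) as [i [Hi Bi]]. exists i. split; [exact Hi|].
    apply germ_of_twist with (phi i) (psi i). intros k Hk.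
    exact (proj2 (Hg i Hi) k (in_brick_agree Bi Hk)).
Qed.

Lemma SV_germ_exists h p : SV G h -> exists g, G g /\ germ h p g.
Proof.
  intros Hh. destruct (SV_germ_letter Hh) as [n [g [HG Hgerm]]].
  destruct (Hgerm p false) as [i [Hi Hi']].
  exists (g i). split; [exact (HG i Hi) | exact Hi'].
Qed.

Lemma SV_letter_germ_bounded (XG : list (Perm S)) h : generates G XG -> SV G h ->
  exists M, forall p b, exists g, germ (letter (b, h)) p g /\ wlen_le XG g M.
Proof.
  intros HXG Hh. destruct (SV_germ_letter Hh) as [n [g [HG Hgerm]]].
  destruct (@uniform_bound nat (fun i M => wlen_le XG (g i) M) (seq 0 n)) as [M HM].
  - intros i a b Ha Hab. exact (wlen_le_trans Ha Hab).
  - intros i Hi. apply in_seq in Hi. exact (generates_wlen HXG (HG i (proj2 Hi))).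
  - exists M. intros p b. destruct (Hgerm p b) as [i [Hi Hi']].
    exists (letter (b, g i)). split; [exact Hi'|].
    apply wlen_letter, HM, in_seq. lia.
Qed.

Lemma SV_word_germ_bounded (XG : list (Perm S)) (XV : list (Perm (Conf S))) :
  generates G XG -> (forall z, In z XV -> SV G z) ->
  exists M, forall w, word_in XV w ->
    forall p, exists g, germ (eval_word w) p g /\ wlen_le XG g (M * length w).
Proof.
  intros HXG HXV.
  destruct (@uniform_bound _ (fun z M => forall p b, exists g,
              germ (letter (b, z)) p g /\ wlen_le XG g M) XV) as [M HM].
  - intros z a c Ha Hac p b. destruct (Ha p b) as [g [Hg Hlen]].
    exists g. split; [exact Hg | exact (wlen_le_trans Hlen Hac)].
  - intros z Hz. exact (SV_letter_germ_bounded HXG (HXV z Hz)).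
  - exists M. intros w Hw. induction Hw as [|[b z] w Hz Hw IH]; intros p; simpl.
    + exists (pid S). split; [apply germ_pid|]. rewrite Nat.mul_0_r. apply wlen_pid.
    + destruct (IH p) as [g2 [A2 B2]].
      destruct (HM z Hz (pf (eval_word w) p) b) as [g1 [A1 B1]].
      exists (pcomp g1 g2). split; [exact (germ_pcomp A2 A1)|].
      rewrite Nat.mul_succ_r, Nat.add_comm.
      exact (wlen_pcomp B1 B2).
Qed.

End TwistedGroupGerms.

Section Retraction.
Context {S : Type} {G : Perm S -> Prop}.

Definition base_point : Conf S := fun _ _ => false.

Definition germ_retraction (x : SVType G) : GType G :=
  let e := constructive_indefinite_description _
             (SV_germ_exists (pinv (proj1_sig x) base_point) (proj2_sig x)) in
  exist G (proj1_sig e) (proj1 (proj2_sig e)).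

Lemma germ_retraction_spec x :
  germ (proj1_sig x) (pinv (proj1_sig x) base_point) (proj1_sig (germ_retraction x)).
Proof.
  exact (proj2 (proj2_sig (constructive_indefinite_description _
    (SV_germ_exists (pinv (proj1_sig x) base_point) (proj2_sig x))))).
Qed.

Lemma germ_retraction_iota0 g : germ_retraction (iota0 g) = g.
Proof.
  destruct g as [g Hg]. apply eq_sig_hprop; [intros; apply proof_irrelevance|].
  exact (germ_unique (germ_retraction_spec (iota0 (exist G g Hg))) (germ_tauPerm g _)).
Qed.

(* By the chain rule, germ_retraction is a cocycle. *)
Lemma germ_retraction_diff {x y : SVType G} {h g} :
  h = pcomp (pinvp (proj1_sig x)) (proj1_sig y) ->
  germ h (pinv (proj1_sig y) base_point) g ->
  g = pcomp (pinvp (proj1_sig (germ_retraction x))) (proj1_sig (germ_retraction y)).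
Proof.
  destruct x as [x Hx], y as [y Hy]; simpl. intros -> Hg.
  pose proof (germ_retraction_spec (exist _ x Hx)) as Rx.
  pose proof (germ_retraction_spec (exist _ y Hy)) as Ry. simpl in Rx, Ry.
  assert (Hxy : germ (pcomp x (pcomp (pinvp x) y)) (pinv y base_point)
                  (pcomp (proj1_sig (germ_retraction (exist _ x Hx))) g)).
  { apply germ_pcomp; [exact Hg|]. simpl. rewrite pKV. exact Rx. }
  replace (pcomp x (pcomp (pinvp x) y)) with y in Hxy
    by (apply perm_ext; intros k; simpl; rewrite pKV; reflexivity).
  rewrite (germ_unique Ry Hxy). apply perm_ext. intros s. simpl. rewrite pK. reflexivity.
Qed.

Lemma germ_retraction_lipschitz (XG : list (Perm S)) (XV : list (Perm (Conf S))) :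
  generates G XG -> generates (SV G) XV ->
  exists M, forall x y, (dG XG (germ_retraction x) (germ_retraction y) <= INR M * dSV XV x y)%R.
Proof.
  intros HXG HXV.
  destruct (SV_word_germ_bounded _ HXG (proj1 HXV)) as [M HM].
  exists M. intros x y. unfold dG, dSV, word_dist. rewrite <- mult_INR. apply le_INR.
  apply word_length_le_scaled.
  - exact (wlen_exists_diff HXV (proj2_sig x) (proj2_sig y)).
  - intros w Hw Ew. destruct (HM w Hw (pinv (proj1_sig y) base_point)) as [g [Hg Hlen]].
    rewrite <- (germ_retraction_diff Ew Hg). exact Hlen.
Qed.

End Retraction.

Section Iota.
Variables (S : Type) (G : Perm S -> Prop).

Lemma tauPerm_pid : tauPerm (pid S) = pid (Conf S).
Proof. apply perm_ext. reflexivity. Qed.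

Lemma tauPerm_pcomp (a b : Perm S) : tauPerm (pcomp a b) = pcomp (tauPerm a) (tauPerm b).
Proof. apply perm_ext. reflexivity. Qed.

Lemma tauPerm_pinvp (a : Perm S) : tauPerm (pinvp a) = pinvp (tauPerm a).
Proof. apply perm_ext. reflexivity. Qed.

Lemma tauPerm_letter b (a : Perm S) : tauPerm (letter (b, a)) = letter (b, tauPerm a).
Proof. destruct b; [apply tauPerm_pinvp | reflexivity]. Qed.

Lemma iota0_lipschitz (XG : list (Perm S)) (XV : list (Perm (Conf S))) :
  generates G XG -> generates (SV G) XV ->
  exists K, forall a b : GType G, (dSV XV (iota0 a) (iota0 b) <= INR K * dG XG a b)%R.
Proof.
  intros HXG HXV.
  destruct (@uniform_bound _ (fun x K => wlen_le XV (tauPerm x) K) XG) as [K HK].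
  - intros x m n Hm Hmn. exact (wlen_le_trans Hm Hmn).
  - intros x Hx. exact (generates_wlen HXV (tau_SV G x (proj1 HXG x Hx))).
  - exists K. intros [a Ha] [b Hb]. unfold dG, dSV, word_dist; simpl.
    rewrite <- mult_INR. apply le_INR.
    rewrite <- tauPerm_pinvp, <- tauPerm_pcomp.
    apply word_length_le_scaled; [exact (wlen_exists_diff HXG Ha Hb)|].
    intros w Hw <-.
    apply wlen_hom_word with (X := XG); [exact tauPerm_pid | exact tauPerm_pcomp | | exact Hw].
    intros x c Hx. rewrite tauPerm_letter. apply wlen_letter, HK, Hx.
Qed.

End Iota.

Lemma coarse_lipschitz_of_linear {X Y} {dX : X -> X -> R} {dY : Y -> Y -> R} {f : X -> Y} {C} :
  (forall x y, (0 <= dX x y)%R) -> (forall x y, (dY (f x) (f y) <= INR C * dX x y)%R) ->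
  coarse_lipschitz dX dY f.
Proof.
  intros Hnonneg Hf. pose proof (pos_INR C).
  exists (INR C + 1)%R, 1%R. repeat split; try lra.
  intros x y. specialize (Hf x y). specialize (Hnonneg x y). nra.
Qed.

Section CoarseRetraction.
Context {A B : Type} {dA : A -> A -> R} {dB : B -> B -> R}.
Hypotheses (dA_nonneg : forall x y, (0 <= dA x y)%R) (dB_nonneg : forall x y, (0 <= dB x y)%R).
Context {rho : A -> B} {iota : B -> A} {M K : nat}.
Hypothesis rho_lipschitz : forall x y, (dB (rho x) (rho y) <= INR M * dA x y)%R.
Hypothesis iota_lipschitz : forall x y, (dA (iota x) (iota y) <= INR K * dB x y)%R.
Hypothesis rho_iota : forall y, rho (iota y) = y.

Lemma quasi_retract_of_retraction : (forall y, dB y y = 0%R) -> quasi_retract dA dB.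
Proof.
  intros Hrefl. exists rho, iota, 1%R. repeat split.
  - exact (coarse_lipschitz_of_linear dA_nonneg rho_lipschitz).
  - exact (coarse_lipschitz_of_linear dB_nonneg iota_lipschitz).
  - lra.
  - intros y. rewrite rho_iota, Hrefl. lra.
Qed.

Lemma qi_embedding_of_retraction : qi_embedding dB dA iota.
Proof.
  pose proof (pos_INR M). pose proof (pos_INR K).
  set (C := (INR K + INR M + 1)%R).
  assert (HC : (0 < C)%R) by (unfold C; lra).
  exists C, 1%R. split; [exact HC|]. split; [lra|]. intros x y. split.
  - specialize (iota_lipschitz x y). specialize (dB_nonneg x y). unfold C. nra.
  - pose proof (rho_lipschitz (iota x) (iota y)) as Hrho. rewrite !rho_iota in Hrho.
    specialize (dA_nonneg (iota x) (iota y)).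
    assert (Hle : (dB x y <= C * dA (iota x) (iota y))%R) by (unfold C; nra).
    apply Rle_ge. apply Rle_trans with (/ C * dB x y)%R; [lra|].
    apply Rmult_le_reg_l with C; [exact HC|].
    rewrite <- Rmult_assoc, Rinv_r, Rmult_1_l by lra. exact Hle.
Qed.

End CoarseRetraction.

Theorem theoremB (S : Type) (G : Perm S -> Prop)
  (XG : list (Perm S)) (XV : list (Perm (Conf S))) :
  inhabited S ->
  is_subgroup G ->
  generates G XG ->
  generates (SV G) XV ->
  (exists rho : SVType G -> GType G,
      coarse_lipschitz (@dSV S G XV) (@dG S G XG) rho /\
      forall g : GType G, rho (iota0 g) = g) /\
  quasi_retract (@dSV S G XV) (@dG S G XG) /\
  qi_embedding (@dG S G XG) (@dSV S G XV) (@iota0 S G).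
Proof.
  intros _ _ HXG HXV.
  destruct (germ_retraction_lipschitz HXG HXV) as [M HM].
  destruct (iota0_lipschitz HXG HXV) as [K HK].
  assert (dSV_nonneg : forall x y : SVType G, (0 <= dSV XV x y)%R) by (intros; apply pos_INR).
  assert (dG_nonneg : forall x y : GType G, (0 <= dG XG x y)%R) by (intros; apply pos_INR).
  split; [|split].
  - exists (germ_retraction (G := G)). split; [|exact germ_retraction_iota0].
    exact (coarse_lipschitz_of_linear dSV_nonneg HM).
  - apply (quasi_retract_of_retraction dSV_nonneg dG_nonneg HM HK germ_retraction_iota0).
    intros y. apply word_dist_refl.
  - exact (qi_embedding_of_retraction dSV_nonneg dG_nonneg HM HK germ_retraction_iota0).
Qed.
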